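(* Let $(N,\{S_i\}_{i\in N},S,\{f_i\}_{i\in N})$ be a supermodular game such that $S$ is a subcomplete sublattice of $\prod_{i\in N}S_i$. Suppose that for every $i\in N$ and every $x\in S$, the function $f_i(\cdot,x_{-i}):S_i(x_{-i})\to\mathbb{R}$ is downward upper semicontinuous. Then for every $i\in N$, every $x\in S$ and every nonempty chain $C\subset S(x)$, there is $b\in S(x)$ such that $b\le c$ for every $c\in C$ and $f_i(b_i,x_{-i})\ge\limsup_{c\in C,c\to\inf_S C}f_i(c_i,x_{-i})$.
   Context: A subset $T$ of a poset $P$ is a subcomplete sublattice of $P$ if for every nonempty $A\subset T$, $\sup_P A$ and $\inf_P A$ exist and belong to $T$; $P$ is a complete lattice if it is a subcomplete sublattice of itself. A supermodular game $(N,\{S_i\},S,\{f_i\})$ consists of: a nonempty finite set $N$ of players; for each $i\in N$ a nonempty lattice $S_i$; a nonempty sublattice $S\subset\prod_{i\in N}S_i$ (product order) such that every projection $S\to S_i$ is surjective; and for each $i\in N$ a function $f_i:S\to\mathbb{R}$; such that for every $i\in N$: (1) for every $x_{-i}\in S_{-i}:=\prod_{j\ne i}S_j$, the function $f_i(\cdot,x_{-i})$ is supermodular on the sublattice $S_i(x_{-i}):=\{x_i\in S_i:(x_i,x_{-i})\in S\}$ of $S_i$; (2) $f_i$ has increasing differences on $S$ viewed as a subset of $S_i\times S_{-i}$: whenever $x_i\le x_i'$, $x_{-i}\le x_{-i}'$ and the four points $(x_i,x_{-i}),(x_i',x_{-i}),(x_i,x_{-i}'),(x_i',x_{-i}')$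 lie in $S$, one has $f_i(x_i',x_{-i})-f_i(x_i,x_{-i})\le f_i(x_i',x_{-i}')-f_i(x_i,x_{-i}')$. For $x\in S$, $S(x):=\left(\prod_{i\in N}S_i(x_{-i})\right)\cap S$. For a chain $C$ in a poset and a real function $g$ on $C$, $\limsup_{c\in C,c\to\inf C}g(c):=\inf_{c'\in C}\sup\{g(c):c\in C,c\le c'\}$. For a complete lattice $X$, a function $f:X\to\mathbb{R}$ is downward upper semicontinuous if for every nonempty chain $C\subset X$, $\limsup_{x\in C,x\to\inf_X C}f(x)\le f(\inf_X C)$. (Under the hypotheses, each $S_i(x_{-i})$ is a complete lattice.) *)

From HB Require Import structures.
From mathcomp Require Import all_boot all_order all_algebra.
From mathcomp Require Import boolp classical_sets reals constructive_ereal ereal.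
Set Implicit Arguments. Unset Strict Implicit. Unset Printing Implicit Defensive.
Import Order.TTheory GRing.Theory Num.Theory.
Local Open Scope classical_set_scope.
Local Open Scope ring_scope.

Section Game.
(* N = the finite player set I; S_i = T i, a lattice; profiles are
   dependent functions (product of the S_i). *)
Context (I : finType) (d : I -> Order.disp_t) (T : forall i, latticeType (d i)).

Definition profile := forall i, T i.

Definition ple (x y : profile) : Prop := forall i, (x i <= y i)%O.
Definition pmeet (x y : profile) : profile := fun i => (x i `&` y i)%O.
Definition pjoin (x y : profile) : profile := fun i => (x i `|` y i)%O.

(* (a, x_{-i}) : replace coordinate i of x by a *)
Definition upd (x : profile) (i : I) (a : T i) : profile := @dfwith I T x i a.

Definition is_lub {P : Type} (le : P -> P -> Prop) (A : set P) (s : P) : Prop :=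
  (forall a, A a -> le a s) /\ (forall u, (forall a, A a -> le a u) -> le s u).
Definition is_glb {P : Type} (le : P -> P -> Prop) (A : set P) (s : P) : Prop :=
  (forall a, A a -> le s a) /\ (forall u, (forall a, A a -> le u a) -> le u s).

Definition is_glb_in {P : Type} (le : P -> P -> Prop) (X C : set P) (s : P) : Prop :=
  X s /\ (forall a, C a -> le s a) /\
  (forall u, X u -> (forall a, C a -> le u a) -> le u s).

Definition is_chain {P : Type} (le : P -> P -> Prop) (C : set P) : Prop :=
  forall a b, C a -> C b -> le a b \/ le b a.

Definition subcomplete (S : set profile) : Prop :=
  forall A : set profile, A `<=` S -> A !=set0 ->
    (exists s, is_lub ple A s /\ S s) /\ (exists t, is_glb ple A t /\ S t).

Definition sublattice (S : set profile) : Prop :=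
  forall x y, S x -> S y -> S (pmeet x y) /\ S (pjoin x y).

Definition Si (S : set profile) (i : I) (x : profile) : set (T i) :=
  [set a | S (upd x a)].

Definition Sx (S : set profile) (x : profile) : set profile :=
  [set y | S y /\ forall i, @Si S i x (y i)].

(* limsup_{c in C, c -> inf C} g(c) := inf_{c' in C} sup {g c | c in C, c <= c'} *)
Definition limsup_chain {R : realType} {P : Type} (le : P -> P -> Prop)
  (C : set P) (g : P -> R) : \bar R :=
  ereal_inf [set ereal_sup [set (g c)%:E | c in [set c | C c /\ le c c']]
            | c' in C].

Definition supermodular_game {R : realType} (S : set profile)
  (f : I -> profile -> R) : Prop :=
  (0 < #|I|)%N /\
  (forall i, inhabited (T i)) /\
  S !=set0 /\
  sublattice S /\
  (forall i (a : T i), exists x, S x /\ x i = a) /\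
      (forall i (x : profile) (a b : T i),
          @Si S i x a -> @Si S i x b ->
          f i (upd x a) + f i (upd x b) <=
          f i (upd x (a `|` b)%O) + f i (upd x (a `&` b)%O)) /\
      (forall i (x y : profile) (a a' : T i),
          (a <= a')%O -> (forall j, j != i -> (x j <= y j)%O) ->
          S (upd x a) -> S (upd x a') -> S (upd y a) -> S (upd y a') ->
          f i (upd x a') - f i (upd x a) <= f i (upd y a') - f i (upd y a)).

Definition downward_usc {R : realType} {P : Type} (le : P -> P -> Prop)
  (X : set P) (g : P -> R) : Prop :=
  forall C : set P, C `<=` X -> C !=set0 -> is_chain le C ->
    forall m, is_glb_in le X C m -> (limsup_chain le C g <= (g m)%:E)%E.

End Game.
Arguments Si {I d T} S i x _.

(** The greatest lower bound [b] of the chain [C] in the product order is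
    computed coordinatewise; subcompleteness of [S] puts [b] in [S], and
    applied to the sets [{(c_j, x_{-j}) | c in C}] it also shows
    [(b_j, x_{-j}) ∈ S], so [b ∈ S(x)].  The projection [{c_i | c in C}] is
    then a chain in [S_i(x_{-i})] with infimum [b_i], and projecting can only
    increase the limsup, so downward upper semicontinuity of [f_i(., x_{-i})]
    gives the bound. *)
From HB Require Import structures.
From mathcomp Require Import all_boot all_order all_algebra.
From mathcomp Require Import boolp classical_sets reals constructive_ereal ereal.
Import Order.TTheory GRing.Theory Num.Theory.
Local Open Scope classical_set_scope.
Local Open Scope ring_scope.

Lemma is_chain_image {P Q : Type} {leP : P -> P -> Prop} {leQ : Q -> Q -> Prop}
    (p : P -> Q) (C : set P) :
  (forall a b, leP a b -> leQ (p a) (p b)) ->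
  is_chain leP C -> is_chain leQ (p @` C).
Proof.
move=> p_homo Cch _ _ [a Ca <-] [b Cb <-].
by case: (Cch a b Ca Cb) => [ab|ba]; [left|right]; apply: p_homo.
Qed.

Lemma limsup_chain_image_le {R : realType} {P Q : Type}
    {leP : P -> P -> Prop} {leQ : Q -> Q -> Prop} (p : P -> Q) (C : set P)
    (g : Q -> R) :
  (forall a b, leP a b -> leQ (p a) (p b)) ->
  (limsup_chain leP C (g \o p) <= limsup_chain leQ (p @` C) g)%E.
Proof.
move=> p_homo; apply: le_ereal_inf_tmp => _ [_ [c' Cc' <-] <-].
pose below_c' := [set c | C c /\ leP c c'].
apply: (@le_trans _ _ (ereal_sup [set (g (p c))%:E | c in below_c'])).
  by apply: ereal_inf_lbound; exists c'.
apply: ereal_sup_le => _ [c [Cc le_cc'] <-].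
by exists (p c) => //; split; [exists c | apply: p_homo].
Qed.

Lemma is_glb_in_glb {P : Type} (le : P -> P -> Prop) (X C : set P) (s : P) :
  is_glb le C s -> X s -> is_glb_in le X C s.
Proof. by move=> [lbs glbs] Xs; split=> //; split=> // u _; apply: glbs. Qed.

Section ProductOrder.
Context {I : finType} {d : I -> Order.disp_t} {T : forall i, latticeType (d i)}.
Local Notation profile := (profile T).
Local Notation ple := (@ple I d T).

Lemma upd_eq (x : profile) {i} (a : T i) : upd x a i = a.
Proof. exact: dfwith_in. Qed.

Lemma upd_neq (x : profile) {i j} (a : T i) : i != j -> upd x a j = x j.
Proof. exact: dfwith_out. Qed.

Lemma upd_upd (x : profile) {i} (a b : T i) : upd (upd x a) b = upd x b.
Proof.
apply: functional_extensionality_dep => j.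
by case: (eqVneq i j) => [<-|ij]; rewrite ?upd_eq ?upd_neq.
Qed.

Lemma Si_upd (S : set profile) (x : profile) i (a : T i) :
  Si S i (upd x a) = Si S i x.
Proof. by rewrite /Si; under eq_set => b do rewrite upd_upd. Qed.

Lemma ple_anti (x y : profile) : ple x y -> ple y x -> x = y.
Proof.
move=> xy yx; apply: functional_extensionality_dep => j.
by apply/eqP; rewrite eq_le xy yx.
Qed.

Lemma is_glb_unique {A : set profile} {s t : profile} :
  is_glb ple A s -> is_glb ple A t -> s = t.
Proof.
by move=> [lbs glbs] [lbt glbt]; apply: ple_anti; [apply: glbt | apply: glbs].
Qed.

Lemma is_glb_coord {A : set profile} {t : profile} j :
  is_glb ple A t -> is_glb (fun a b : T j => (a <= b)%O) [set a j | a in A] (t j).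
Proof.
move=> [lbt glbt]; split; first by move=> _ [a Aa <-]; apply: lbt.
move=> u lbu; rewrite -(upd_eq t u); apply: glbt => a Aa k.
case: (eqVneq j k) => [<-|jk]; rewrite ?upd_eq ?upd_neq //; last exact: lbt.
by apply: lbu; exists a.
Qed.

Lemma is_glb_upd {A : set profile} {t : profile} (x : profile) j :
  A !=set0 -> is_glb ple A t ->
  is_glb ple [set upd x (a j) | a in A] (upd x (t j)).
Proof.
move=> [a0 Aa0] glb_t; have [lbt glbt] := is_glb_coord j glb_t.
split.
  move=> _ [a Aa <-] k; case: (eqVneq j k) => [<-|jk]; rewrite ?upd_eq ?upd_neq //.
  by apply: lbt; exists a.
move=> u lbu k; case: (eqVneq j k) => [<-|jk]; rewrite ?upd_eq ?upd_neq //.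
  by apply: glbt => _ [a Aa <-]; rewrite -(upd_eq x (a j)); apply: lbu; exists a.
by rewrite -(upd_neq x (a0 j) jk); apply: lbu; exists a0.
Qed.

Lemma subcomplete_glb_Sx {S : set profile} {x : profile} {C : set profile} :
  subcomplete S -> C `<=` Sx S x -> C !=set0 ->
  exists b, is_glb ple C b /\ Sx S x b.
Proof.
move=> S_sc C_Sx [c0 Cc0].
have C_S : C `<=` S by move=> c /C_Sx[].
have [_ [b [glb_b Sb]]] := S_sc C C_S (ex_intro _ c0 Cc0).
exists b; split=> //; split=> // j.
pose A := [set upd x (c j) | c in C].
have A_S : A `<=` S by move=> _ [c Cc <-]; exact: (proj2 (C_Sx c Cc) j).
have [_ [t [glb_t St]]] := S_sc A A_S (ex_intro _ _ (ex_intro2 _ _ c0 Cc0 erefl)).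
by rewrite /Si /= (is_glb_unique (is_glb_upd x j (ex_intro _ c0 Cc0) glb_b) glb_t).
Qed.

End ProductOrder.

Theorem lemma5p7 (R : realType) (I : finType) (d : I -> Order.disp_t)
  (T : forall i, latticeType (d i)) (S : set (profile T)) (f : I -> profile T -> R) :
  supermodular_game S f ->
  subcomplete S ->
  (forall i (x : profile T), S x ->
     downward_usc (fun a b : T i => (a <= b)%O) (Si S i x)
       (fun a => f i (upd x a))) ->
  forall i (x : profile T) (C : set (profile T)),
    C `<=` Sx S x -> C !=set0 -> is_chain (@ple I d T) C ->
    exists b, Sx S x b /\ (forall c, C c -> ple b c) /\
      (limsup_chain (@ple I d T) C (fun c => f i (upd x (c i)))
         <= (f i (upd x (b i)))%:E)%E.
Proof.
move=> _ S_sc f_usc i x C C_Sx C0 C_chain.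
have [b [glb_b Sx_b]] := subcomplete_glb_Sx S_sc C_Sx C0.
exists b; split=> //; split; first by case: glb_b.
have proj_homo : forall c c' : profile T, ple c c' -> (c i <= c' i)%O by [].
apply: le_trans (limsup_chain_image_le (leQ := fun a b : T i => (a <= b)%O)
  (fun c : profile T => c i) C (fun a => f i (upd x a)) proj_homo) _.
(* [x] itself need not lie in [S]; [(c0_i, x_{-i})] does and has the same section. *)
have [c0 Cc0] := C0; set x' := upd x (c0 i).
have S_x' : S x' by exact: (proj2 (C_Sx c0 Cc0) i).
have f_x' : (fun a : T i => f i (upd x' a)) = (fun a => f i (upd x a)).
  by apply: funext => a; rewrite upd_upd.
have := f_usc i x' S_x' [set c i | c in C]; rewrite f_x' Si_upd => usc.
rewrite -[upd x (b i)](upd_upd x (c0 i)); apply: (usc _ _ _ (b i)).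
- by move=> _ [c Cc <-]; exact: (proj2 (C_Sx c Cc) i).
- by exists (c0 i), c0.
- exact: is_chain_image (fun c : profile T => c i) _ proj_homo C_chain.
- by apply: is_glb_in_glb; [apply: is_glb_coord | case: Sx_b].
Qed.
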